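(* Assume every node of $G$ belongs to at least one $h$-clique. Let $f^*$ be any maximum flow in $\mathcal{H}$. Then in the residual graph $\mathcal{H}_{f^*}$ there is a directed path from $t$ to every node $v\in V$.
   Context: Let $G=(V,E)$ be a finite simple undirected graph and $h\ge2$. An $h$-clique is a set of $h$ pairwise adjacent nodes; $\mu_h(G[W])$ counts $h$-cliques inside $W$; for nonempty $W$, $\rho_h(W)=\mu_h(G[W])/|W|$; $\rho_h^*=\max_{\emptyset\ne W\subseteq V}\rho_h(W)$; $deg_G(v,h)$ is the number of $h$-cliques containing $v$; $\Lambda$ is the set of $(h-1)$-cliques of $G$ contained in some $h$-clique. Flow network $\mathcal{H}=(V_\mathcal{H},E_\mathcal{H},c)$: $V_\mathcal{H}=V\cup\Lambda\cup\{s,t\}$; for $v\in V$: arcs $(s,v)$ cap. $deg_G(v,h)$, $(v,t)$ cap. $h\rho_h^*$, $(v,s),(t,v)$ cap. $0$; for $\lambda\in\Lambda$, $v\in\lambda$: $(\lambda,v)$ cap. $+\infty$, $(v,\lambda)$ cap. $0$; for $\lambda\in\Lambda$, $v\in V$ with $\lambda\cup\{v\}$ an $h$-clique: $(v,\lambda)$ cap. $1$, $(\lambda,v)$ cap. $0$; no other arcs. A flow $f$ satisfies $f(u,v)\le c(u,v)$, $f(v,u)=-f(u,v)$, conservation at nodes other than $s,t$; value $\sum_v f(s,v)$. The residual graph $\mathcal{H}_{f}$ has an arc $(u,v)$ whenever $(u,v)\in E_\mathcal{H}$ and $c(u,v)-f(u,v)>0$. *)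

From HB Require Import structures.
From mathcomp Require Import all_boot all_order all_algebra.
From mathcomp Require Import reals.
Set Implicit Arguments. Unset Strict Implicit. Unset Printing Implicit Defensive.
Import Order.TTheory GRing.Theory Num.Theory.
Local Open Scope ring_scope.

Section Defs.
Variables (T : finType) (e : rel T) (h : nat).

Definition simple_graph : Prop := symmetric e /\ irreflexive e.

Definition is_clique (k : nat) (S : {set T}) : bool :=
  (#|S| == k) && [forall x in S, forall y in S, (x != y) ==> e x y].

Definition mu (W : {set T}) : nat := #|[set S : {set T} | is_clique h S && (S \subset W)]|.

Definition hdeg (v : T) : nat := #|[set S : {set T} | is_clique h S && (v \in S)]|.

Definition Lambda : {set {set T}} :=
  [set l : {set T} | is_clique h.-1 l && [exists S : {set T}, is_clique h S && (l \subset S)]].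

Variable R : realType.

Definition rho (W : {set T}) : R := (mu W)%:R / (#|W|)%:R.

(* rho_h^* = max over nonempty W (all values are >= 0, so 0 is a neutral start) *)
Definition rho_star : R := \big[Num.max/0]_(W : {set T} | W != set0) rho W.

Definition lam_t := {l : {set T} | l \in Lambda}.
Definition hnode : finType := (bool + (T + lam_t))%type.
Definition Hs : hnode := inl true.
Definition Ht : hnode := inl false.
Definition Hv (v : T) : hnode := inr (inl v).
Definition Hl (l : lam_t) : hnode := inr (inr l).

Definition is_arc (x y : hnode) : bool :=
  match x, y with
  | inl true, inr (inl _) => true
  | inr (inl _), inl false => true
  | inr (inl _), inl true => true
  | inl false, inr (inl _) => true
  | inr (inr l), inr (inl v) => (v \in val l) || is_clique h (v |: val l)
  | inr (inl v), inr (inr l) => (v \in val l) || is_clique h (v |: val l)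
  | _, _ => false
  end.

(* capacities; None stands for +infinity; non-arcs have capacity 0 *)
Definition cap (x y : hnode) : option R :=
  match x, y with
  | inl true, inr (inl v) => Some (hdeg v)%:R
  | inr (inl _), inl false => Some (h%:R * rho_star)
  | inr (inr l), inr (inl v) => if v \in val l then None else Some 0
  | inr (inl v), inr (inr l) => if is_clique h (v |: val l) then Some 1 else Some 0
  | _, _ => Some 0
  end.

Definition le_cap (a : R) (c : option R) : bool :=
  if c is Some c' then a <= c' else true.

Definition is_flow (f : hnode -> hnode -> R) : Prop :=
  [/\ forall x y, le_cap (f x y) (cap x y),
      forall x y, f y x = - f x y &
      forall x, x != Hs -> x != Ht -> \sum_(y : hnode) f x y = 0].

Definition flow_value (f : hnode -> hnode -> R) : R := \sum_(v : T) f Hs (Hv v).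

Definition is_max_flow (f : hnode -> hnode -> R) : Prop :=
  is_flow f /\ forall g, is_flow g -> flow_value g <= flow_value f.

Definition residual_arc (f : hnode -> hnode -> R) (x y : hnode) : bool :=
  is_arc x y && (if cap x y is Some c then 0 < c - f x y else true).

Definition res_reachable (f : hnode -> hnode -> R) (x y : hnode) : Prop :=
  exists p : seq hnode, path (residual_arc f) x p /\ last x p = y.

End Defs.

From HB Require Import structures.
From mathcomp Require Import all_boot all_order all_algebra.
From mathcomp Require Import reals.
From mathcomp Require Import lra.
Set Implicit Arguments. Unset Strict Implicit. Unset Printing Implicit Defensive.
Import Order.TTheory GRing.Theory Num.Theory.
Local Open Scope ring_scope.

(* A maximum flow has no augmenting path, so the set Z of nodes reachable from s in the
   residual graph avoids t, and every arc leaving Z, except those back to s, is saturated.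
   Let W be the set of vertices in Z.  Each h-clique inside W contains h vertices of W, and
   every other h-clique through v in W is v together with an (h-1)-clique outside Z, reached
   from v by a saturated unit arc; since mu(W) <= rho* |W|, the capacity leaving Z towards t
   and Lambda already accounts for the whole degree of W.  Flow conservation on Z then forces
   every arc (s,v) to be saturated.  Finally, if v were not reachable from t, no residual arc
   would enter the set of inner nodes unreachable from t except from s, so s would send a
   nonpositive amount into that set, while it sends deg(v,h) > 0 into v. *)

Section Cliques.
Variables (T : finType) (e : rel T) (h : nat).

Lemma clique_setD1_in_Lambda (S : {set T}) (v : T) :
  is_clique e h S -> v \in S -> S :\ v \in Lambda e h.
Proof.
move=> cliqueS vS; rewrite inE; apply/andP; split; last first.
  by apply/existsP; exists S; rewrite cliqueS subD1set.
case/andP: cliqueS => /eqP cardS /forallP adjS; apply/andP; split.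
  by rewrite -cardS (cardsD1 v S) vS.
apply/forallP => x; apply/implyP => /setD1P[_ xS].
apply/forallP => y; apply/implyP => /setD1P[_ yS].
by move/implyP/(_ xS)/forallP/(_ y)/implyP/(_ yS): (adjS x).
Qed.

Definition cliques_through (W : {set T}) (v : T) : {set {set T}} :=
  [set S | is_clique e h S && (v \in S) && (S \subset W)].

Definition outer_cliques (L : pred (lam_t e h)) (v : T) : {set lam_t e h} :=
  [set l | ~~ L l & is_clique e h (v |: val l)].

(* An h-clique through v that leaves W is v |: l for l := S :\ v, and l cannot lie in L. *)
Lemma hdeg_le_through_outer (W : {set T}) (L : pred (lam_t e h)) (v : T) :
  (forall l, L l -> val l \subset W) -> v \in W ->
  (hdeg e h v <= #|cliques_through W v| + #|outer_cliques L v|)%N.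
Proof.
move=> LW vW; pose A := [set S | is_clique e h S && (v \in S)].
rewrite /hdeg -/A -(cardsID [set S : {set T} | S \subset W] A); apply: leq_add.
  by apply/subset_leq_card/subsetP => S; rewrite !inE.
apply: leq_trans (leq_imset_card (fun l : lam_t e h => v |: val l) _).
apply/subset_leq_card/subsetP => S; rewrite !inE => /andP[SnW /andP[cliqueS vS]].
apply/imsetP; exists (exist _ (S :\ v) (clique_setD1_in_Lambda cliqueS vS)); last first.
  by rewrite /= setD1K.
rewrite inE /= setD1K // cliqueS andbT; apply/negP => /LW /subsetP S'W.
move/negP: SnW; apply; apply/subsetP => x xS.
by case: (eqVneq x v) => [-> //|xv]; apply: S'W; rewrite !inE xv.
Qed.

Lemma sum_card_cliques_through (W : {set T}) :
  (\sum_(v in W) #|cliques_through W v| = h * mu e h W)%N.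
Proof.
pose C := [set S : {set T} | is_clique e h S && (S \subset W)].
have cardE v : #|cliques_through W v| = (\sum_(S in C) (v \in S))%N.
  rewrite -sum1_card big_mkcond [RHS]big_mkcond /=; apply: eq_bigr => S _.
  by rewrite !inE; case: (is_clique e h S); case: (v \in S); case: (S \subset W).
rewrite (eq_bigr _ (fun v _ => cardE v)) exchange_big /= /mu -/C mulnC -sum_nat_const.
apply: eq_bigr => S; rewrite inE => /andP[/andP[/eqP cardS _] SW].
rewrite -cardS -sum1_card big_mkcond [RHS]big_mkcond /=; apply: eq_bigr => v _.
by case: (boolP (v \in S)) => vS; [rewrite (subsetP SW v vS) | case: (v \in W)].
Qed.

Lemma sum_hdeg_le (W : {set T}) (L : pred (lam_t e h)) :
  (forall l, L l -> val l \subset W) ->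
  (\sum_(v in W) hdeg e h v <= h * mu e h W + \sum_(v in W) #|outer_cliques L v|)%N.
Proof.
move=> LW; rewrite -sum_card_cliques_through -big_split /=.
by apply: leq_sum => v; apply: hdeg_le_through_outer.
Qed.

Lemma hdeg_gt0 (v : T) (S : {set T}) : is_clique e h S -> v \in S -> (0 < hdeg e h v)%N.
Proof. by move=> cliqueS vS; apply/card_gt0P; exists S; rewrite inE cliqueS. Qed.

End Cliques.

Lemma exists_pos_lower_bound (R : realDomainType) (X : finType) (P : pred X) (r : X -> R) :
  (forall x, P x -> 0 < r x) -> exists2 eps : R, 0 < eps & forall x, P x -> eps <= r x.
Proof.
move=> r_gt0; exists (\big[Num.min/1]_(x | P x) r x).
  by apply: (big_ind (fun z : R => 0 < z)) => // z w z0 w0; rewrite lt_min z0.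
by move=> x Px; rewrite (bigD1 x) //= ge_min lexx.
Qed.

Section Network.
Variables (T : finType) (e : rel T) (h : nat) (R : realType).
Local Notation node := (hnode e h).
Local Notation sN := (Hs e h).
Local Notation tN := (Ht e h).

Lemma rho_star_ge0 : 0 <= rho_star e h R.
Proof.
apply: (big_ind (fun z : R => 0 <= z)) => // [x y x0 y0|W _]; first by rewrite le_max x0.
by rewrite /rho divr_ge0.
Qed.

Lemma mu_le_rho_star (W : {set T}) : W != set0 -> (mu e h W)%:R <= rho_star e h R * #|W|%:R.
Proof.
move=> W0; rewrite -ler_pdivrMr ?ltr0n ?card_gt0 //.
by rewrite /rho_star; apply: le_bigmax_cond.
Qed.

Lemma sum_hdeg_le_rho_star (W : {set T}) (L : pred (lam_t e h)) :
  (forall l, L l -> val l \subset W) ->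
  \sum_(v in W) (hdeg e h v)%:R <=
  \sum_(v in W) (h%:R * rho_star e h R + (#|outer_cliques L v|)%:R) :> R.
Proof.
move=> LW; have [->|W0] := eqVneq W set0; first by rewrite !big_set0.
apply: le_trans (_ : ((h * mu e h W + \sum_(v in W) #|outer_cliques L v|)%N)%:R <= _).
  by rewrite -natr_sum ler_nat sum_hdeg_le.
rewrite natrD natrM natr_sum big_split /= sumr_const lerD2r -mulrnAr ler_wpM2l ?ler0n //.
by rewrite (le_trans (mu_le_rho_star W0)) // mulr_natr.
Qed.

(* Infinite capacities are read as 0: [fincap] is only used as a lower bound for the flow on
   an arc that is not residual, and arcs of infinite capacity are always residual. *)
Definition fincap (x y : node) : R := odflt 0 (cap R x y).

Lemma cap_ge0 (x y : node) (c : R) : cap R x y = Some c -> 0 <= c.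
Proof.
case: x => [[]|[v|l]]; case: y => [[]|[w|m]] //=; try case: ifP => _;
  try case=> <-; rewrite ?ler0n ?mulr_ge0 ?rho_star_ge0 //.
Qed.

Lemma fincap_ge0 (x y : node) : 0 <= fincap x y.
Proof. by rewrite /fincap; case E: (cap R x y) => //=; apply: cap_ge0 E. Qed.

Lemma fincap_Hv_Hl (v : T) (l : lam_t e h) :
  fincap (Hv e h v) (Hl l) = (is_clique e h (v |: val l))%:R.
Proof. by rewrite /fincap /=; case: ifP. Qed.

Lemma is_arc_sym (x y : node) : is_arc x y = is_arc y x.
Proof. by case: x => [[]|[v|l]]; case: y => [[]|[w|m]]. Qed.

Lemma cap_nonarc (x y : node) : ~~ is_arc x y -> cap R x y = Some 0.
Proof.
case: x => [[]|[v|l]]; case: y => [[]|[w|m]] //=; rewrite negb_or.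
- by case/andP=> _ /negbTE ->.
- by case/andP=> /negbTE ->.
Qed.

Definition inner (x : node) : bool := if x is inr _ then true else false.

Lemma sum_hnode (F : node -> R) :
  \sum_x F x = F sN + F tN + \sum_v F (Hv e h v) + \sum_l F (Hl l).
Proof. by rewrite big_sumType big_bool big_sumType /= !addrA. Qed.

Lemma sum_hnode_cond (Q : pred node) (F : node -> R) :
  \sum_(x | Q x) F x = (if Q sN then F sN else 0) + (if Q tN then F tN else 0)
    + \sum_(v | Q (Hv e h v)) F (Hv e h v) + \sum_(l | Q (Hl l)) F (Hl l).
Proof. by rewrite big_mkcond sum_hnode -!big_mkcond. Qed.

Lemma sum_inner (P : pred node) (F : node -> R) : (forall x, P x -> inner x) ->
  \sum_(x | P x) F x = \sum_(v | P (Hv e h v)) F (Hv e h v) + \sum_(l | P (Hl l)) F (Hl l).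
Proof.
move=> Pin; rewrite sum_hnode_cond.
by case: ifP => [/Pin //|_]; case: ifP => [/Pin //|_]; rewrite !add0r.
Qed.

Lemma card_outer_cliques (L : pred (lam_t e h)) (v : T) :
  (#|outer_cliques L v|)%:R = \sum_(l | ~~ L l) fincap (Hv e h v) (Hl l).
Proof.
rewrite -sum1_card natr_sum big_mkcond [RHS]big_mkcond /=; apply: eq_bigr => l _.
by rewrite fincap_Hv_Hl inE; case: (L l); case: is_clique.
Qed.

Lemma sum_fincap_from_vertex_ge (v : T) (Q : pred node) :
  Q tN -> h%:R * rho_star e h R + \sum_(l | Q (Hl l)) fincap (Hv e h v) (Hl l)
    <= \sum_(y | Q y) fincap (Hv e h v) y.
Proof.
move=> Qt; rewrite sum_hnode_cond Qt.
have s_ge0 : 0 <= if Q sN then fincap (Hv e h v) sN else 0.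
  by case: ifP => // _; apply: fincap_ge0.
have V_ge0 : 0 <= \sum_(w | Q (Hv e h w)) fincap (Hv e h v) (Hv e h w).
  by apply: sumr_ge0 => w _; apply: fincap_ge0.
rewrite [fincap _ tN]/fincap /=; lra.
Qed.

Definition arc_flow (x y a b : node) : R :=
  ((a == x) && (b == y))%:R - ((a == y) && (b == x))%:R.

Fixpoint path_flow (x : node) (p : seq node) (a b : node) : R :=
  if p is y :: p' then arc_flow x y a b + path_flow y p' a b else 0.

Fixpoint path_has_arc (x : node) (p : seq node) (a b : node) : bool :=
  if p is y :: p' then ((a == x) && (b == y)) || path_has_arc y p' a b else false.

Lemma path_flow_antisym (x : node) p a b : path_flow x p b a = - path_flow x p a b.
Proof.
elim: p x => [|y p IHp] x /=; first by rewrite oppr0.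
by rewrite IHp opprD /arc_flow opprB [(b == x) && _]andbC [(b == y) && _]andbC.
Qed.

Lemma path_flow_net (x : node) p a :
  \sum_b path_flow x p a b = (a == x)%:R - (a == last x p)%:R.
Proof.
elim: p x => [|y p IHp] x /=; first by rewrite big1 ?subrr.
have sum_arc (z w : node) : \sum_b (((a == z) && (b == w))%:R : R) = (a == z)%:R.
  case: (a == z) => /=; last by rewrite big1.
  by rewrite (bigD1 w) //= eqxx big1 ?addr0 // => b /negbTE ->.
by rewrite big_split /= IHp sumrB !sum_arc; lra.
Qed.

Lemma path_flow_le_size (x : node) p a b : path_flow x p a b <= (size p)%:R.
Proof.
elim: p x => [|y p IHp] x //=; rewrite -addn1 natrD addrC lerD //.
by rewrite /arc_flow; case: (_ && _); case: (_ && _) => /=; lra.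
Qed.

Lemma path_flow_le0 (x : node) p a b : ~~ path_has_arc x p a b -> path_flow x p a b <= 0.
Proof.
elim: p x => [|y p IHp] x //=; rewrite negb_or => /andP[/negbTE xy p_ab].
rewrite -[0]addr0 lerD ?IHp // /arc_flow xy /=.
by case: (_ && _) => /=; lra.
Qed.

Lemma path_has_arc_rel (r : rel node) (x : node) p a b :
  path r x p -> path_has_arc x p a b -> r a b.
Proof.
elim: p x => [|y p IHp] x //= /andP[rxy rp] /orP[/andP[/eqP -> /eqP -> //]|].
exact: IHp.
Qed.

Section Flow.
Variable f : node -> node -> R.
Hypothesis flow_f : is_flow f.

Lemma flow_antisym (x y : node) : f y x = - f x y.
Proof. by case: flow_f. Qed.

Lemma flow_le_cap (x y : node) : le_cap (f x y) (cap R x y).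
Proof. by case: flow_f. Qed.

Lemma flow_conservation (x : node) : inner x -> \sum_y f x y = 0.
Proof. by move=> inx; case: flow_f => _ _; apply; case: x inx. Qed.

Lemma flow_le0_of_cap0 (x y : node) : cap R x y = Some 0 -> f x y <= 0.
Proof. by move=> cap0; have := flow_le_cap x y; rewrite cap0. Qed.

Lemma flow_source_Hl (l : lam_t e h) : f sN (Hl l) = 0.
Proof.
apply/eqP; rewrite eq_le flow_le0_of_cap0 //=.
by rewrite -oppr_le0 -flow_antisym flow_le0_of_cap0.
Qed.

Lemma fincap_le_flow (x y : node) : ~~ residual_arc f x y -> fincap x y <= f x y.
Proof.
rewrite /residual_arc /fincap; case: (boolP (is_arc x y)) => /= [_|nxy _].
  by case: (cap R x y) => //= c; rewrite -leNgt subr_le0.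
rewrite cap_nonarc //= -oppr_le0 -flow_antisym flow_le0_of_cap0 // cap_nonarc //.
by rewrite is_arc_sym.
Qed.

Lemma net_flow_within0 (P : pred node) : \sum_(x | P x) \sum_(y | P y) f x y = 0.
Proof.
set S := (X in X = 0); suff : S = - S by lra.
rewrite {1}/S exchange_big /= -sumrN; apply: eq_bigr => y _.
by rewrite -sumrN; apply: eq_bigr => x _; apply: flow_antisym.
Qed.

Lemma net_flow_out0 (P : pred node) : (forall x, P x -> inner x) ->
  \sum_(x | P x) \sum_(y | ~~ P y) f x y = 0.
Proof.
move=> Pin; have : \sum_(x | P x) \sum_y f x y = 0.
  by rewrite big1 // => x /Pin; apply: flow_conservation.
by under eq_bigr do rewrite (bigID P); rewrite big_split /= net_flow_within0 add0r.
Qed.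

Lemma source_outflow_cut (P : pred node) : (forall x, P x -> inner x) ->
  \sum_(x | P x) f sN x = \sum_(x | P x) \sum_(y | ~~ P y && (y != sN)) f x y.
Proof.
move=> Pin; have := net_flow_out0 Pin.
rewrite (eq_bigr (fun x => - f sN x + \sum_(y | ~~ P y && (y != sN)) f x y)).
  by rewrite big_split /= sumrN addrC => /eqP; rewrite subr_eq0 => /eqP.
move=> x Px; rewrite (bigD1 sN) /= ?(flow_antisym sN x) //.
by apply/negP => /Pin.
Qed.

Lemma source_outflow_ge_of_closed (P : pred node) : (forall x, P x -> inner x) ->
  (forall x y, P x -> ~~ P y -> y != sN -> ~~ residual_arc f x y) ->
  \sum_(x | P x) \sum_(y | ~~ P y && (y != sN)) fincap x y <= \sum_(x | P x) f sN x.
Proof.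
move=> Pin closedP; rewrite source_outflow_cut //.
apply: ler_sum => x Px; apply: ler_sum => y /andP[nPy ys].
exact/fincap_le_flow/closedP.
Qed.

Lemma source_outflow_le0_of_coclosed (P : pred node) : (forall x, P x -> inner x) ->
  (forall x y, P x -> ~~ P y -> y != sN -> ~~ residual_arc f y x) ->
  \sum_(x | P x) f sN x <= 0.
Proof.
move=> Pin coclosedP; rewrite source_outflow_cut //.
apply: sumr_le0 => x Px; apply: sumr_le0 => y /andP[nPy ys].
rewrite -oppr_ge0 -flow_antisym (le_trans (fincap_ge0 y x)) //.
exact/fincap_le_flow/coclosedP.
Qed.

Lemma path_flow_nonarc (x : node) p a b :
  path (residual_arc f) x p -> ~~ is_arc a b -> path_flow x p a b = 0.
Proof.
move=> rp nab; have no_arc c d : ~~ is_arc c d -> path_flow x p c d <= 0.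
  move=> ncd; apply/path_flow_le0/negP => /(path_has_arc_rel rp).
  by rewrite /residual_arc (negbTE ncd).
apply/eqP; rewrite eq_le no_arc // -oppr_le0 -path_flow_antisym no_arc //.
by rewrite is_arc_sym.
Qed.

Section Augment.
Variables (p : seq node) (eps : R).
Hypotheses (aug_p : path (residual_arc f) sN p) (last_p : last sN p = tN) (eps_gt0 : 0 < eps).
Hypothesis eps_small : forall a b c,
  residual_arc f a b -> cap R a b = Some c -> eps * (size p)%:R <= c - f a b.

Definition augment (a b : node) : R := f a b + eps * path_flow sN p a b.

Lemma augment_is_flow : is_flow augment.
Proof.
split=> [a b|a b|a a_s a_t].
- rewrite /augment; case: (boolP (path_has_arc sN p a b)) => [p_ab|np_ab].
    case cab: (cap R a b) => [c|] //=; rewrite -lerBrDl.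
    apply: le_trans (eps_small (path_has_arc_rel aug_p p_ab) cab).
    by rewrite ler_pM2l // path_flow_le_size.
  have : eps * path_flow sN p a b <= 0 by rewrite pmulr_rle0 ?path_flow_le0.
  by have := flow_le_cap a b; case: (cap R a b) => [c|] //=; lra.
- by rewrite /augment flow_antisym path_flow_antisym; lra.
- rewrite /augment big_split /= flow_conservation; last by case: a a_s a_t => [[]|].
  rewrite -mulr_sumr path_flow_net last_p.
  by rewrite (negbTE a_s) (negbTE a_t) subrr mulr0 addr0.
Qed.

Lemma augment_value : flow_value augment = flow_value f + eps.
Proof.
rewrite /flow_value /augment big_split /= -mulr_sumr; congr (_ + _).
have := path_flow_net sN p sN; rewrite sum_hnode last_p eqxx /=.
have pf0 b : ~~ is_arc sN b -> path_flow sN p sN b = 0 by apply: path_flow_nonarc.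
rewrite !pf0 // [X in _ + X = _]big1 => [|l _]; last by rewrite pf0.
by rewrite !add0r addr0 subr0 => ->; rewrite mulr1.
Qed.

End Augment.

Lemma max_flow_no_augmenting_path : is_max_flow f -> ~~ connect (residual_arc f) sN tN.
Proof.
case=> _ maxf; apply/negP => /connectP[p aug_p last_p].
pose n : R := (size p).+1%:R.
pose slack (ab : node * node) : R :=
  if cap R ab.1 ab.2 is Some c then (c - f ab.1 ab.2) / n else 1.
have slack_gt0 (ab : node * node) : residual_arc f ab.1 ab.2 -> 0 < slack ab.
  rewrite /residual_arc /slack; case: (cap R ab.1 ab.2) => [c|] //= /andP[_ c_gt].
  by rewrite divr_gt0 ?ltr0n.
have [eps eps_gt0 eps_le] := exists_pos_lower_bound slack_gt0.
have eps_small a b c : residual_arc f a b -> cap R a b = Some c ->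
    eps * (size p)%:R <= c - f a b.
  move=> rab cab; have := eps_le (a, b) rab; rewrite /slack /= cab ler_pdivlMr ?ltr0n //.
  by apply: le_trans; rewrite ler_pM2l // ler_nat.
have := maxf _ (augment_is_flow aug_p (esym last_p) eps_gt0 eps_small).
by rewrite (augment_value eps aug_p (esym last_p)); lra.
Qed.

Lemma max_flow_saturates_source (v : T) :
  is_max_flow f -> f sN (Hv e h v) = (hdeg e h v)%:R.
Proof.
move=> maxf; pose Z x := connect (residual_arc f) sN x.
pose P x := Z x && inner x; pose W := [set v | Z (Hv e h v)].
have Zt : ~~ Z tN := max_flow_no_augmenting_path maxf.
have Z_closed x y : Z x -> residual_arc f x y -> Z y.
  by move=> Zx rxy; apply: connect_trans Zx (connect1 rxy).
have Pin x : P x -> inner x by case/andP.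
have P_closed x y : P x -> ~~ P y -> y != sN -> ~~ residual_arc f x y.
  move=> /andP[Zx _] nPy ys; apply/negP => /(Z_closed _ _ Zx) Zy.
  move: ys nPy Zy Zt; case: y => [[]|y] //= _; first by move=> _ Zt' /negP; apply.
  by rewrite /P andbT => /negP.
have W_Lambda l : Z (Hl l) -> val l \subset W.
  move=> Zl; apply/subsetP => u ul; rewrite inE; apply: Z_closed Zl _.
  by rewrite /residual_arc /= ul.
have deg_le u : f sN (Hv e h u) <= (hdeg e h u)%:R by have := flow_le_cap sN (Hv e h u).
have [Zv|nZv] := boolP (Z (Hv e h v)); last first.
  apply/eqP; rewrite eq_le deg_le -[(hdeg e h v)%:R]/(fincap sN (Hv e h v)).
  by rewrite fincap_le_flow //; apply: contra nZv; apply: Z_closed; apply: connect0.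
have slack_ge0 u : u \in W -> 0 <= (hdeg e h u)%:R - f sN (Hv e h u).
  by rewrite subr_ge0.
suff /(psumr_eq0P slack_ge0)/(_ v) : \sum_(u in W) ((hdeg e h u)%:R - f sN (Hv e h u)) = 0.
  by rewrite inE => /(_ Zv) /eqP; rewrite subr_eq0 => /eqP.
apply/eqP; rewrite eq_le sumr_ge0 //.
rewrite sumrB subr_le0 (le_trans (sum_hdeg_le_rho_star W_Lambda)) //.
have -> : \sum_(u in W) f sN (Hv e h u) = \sum_(x | P x) f sN x.
  rewrite sum_inner // [X in _ = _ + X]big1 ?addr0 => [|l _]; last exact: flow_source_Hl.
  by apply: eq_bigl => u; rewrite inE /P andbT.
apply: le_trans (source_outflow_ge_of_closed Pin P_closed).
rewrite sum_inner // -[X in X <= _]addr0; apply: lerD; last first.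
  by apply: sumr_ge0 => x _; apply: sumr_ge0 => y _; apply: fincap_ge0.
rewrite (eq_bigl (fun u => P (Hv e h u))) => [|u]; last by rewrite inE /P andbT.
apply: ler_sum => u _; rewrite card_outer_cliques.
rewrite (eq_bigl (fun l => ~~ P (Hl l) && (Hl l != sN))) => [|l]; last by rewrite /P /= !andbT.
by apply: sum_fincap_from_vertex_ge; rewrite /P andbF.
Qed.

Lemma max_flow_target_reaches (v : T) : is_max_flow f -> (0 < hdeg e h v)%N ->
  connect (residual_arc f) tN (Hv e h v).
Proof.
move=> maxf deg_gt0; apply/negPn/negP => nYv.
pose Y x := connect (residual_arc f) tN x; pose P x := ~~ Y x && inner x.
have Pin x : P x -> inner x by case/andP.
have P_coclosed x y : P x -> ~~ P y -> y != sN -> ~~ residual_arc f y x.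
  move=> /andP[nYx _] nPy ys; apply: contra nYx => ryx; apply: connect_trans (connect1 ryx).
  by move: ys nPy; case: y {ryx} => [[]|y] //= _; rewrite /P andbT negbK.
have := source_outflow_le0_of_coclosed Pin P_coclosed.
rewrite sum_inner // [X in _ + X]big1 ?addr0 => [|l _]; last exact: flow_source_Hl.
rewrite (bigD1 v) /=; last by rewrite /P nYv.
rewrite max_flow_saturates_source //.
have : (0 : R) < (hdeg e h v)%:R by rewrite ltr0n.
have : 0 <= \sum_(u | P (Hv e h u) && (u != v)) f sN (Hv e h u).
  by apply: sumr_ge0 => u _; rewrite max_flow_saturates_source.
lra.
Qed.

End Flow.

End Network.

Theorem lemma5 (T : finType) (e : rel T) (h : nat) (R : realType)
  (f : hnode e h -> hnode e h -> R) :
  simple_graph e -> (2 <= h)%N ->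
  (forall v : T, exists S : {set T}, is_clique e h S /\ v \in S) ->
  is_max_flow f ->
  forall v : T, res_reachable f (Ht e h) (Hv e h v).
Proof.
move=> _ _ cover maxf v.
have [S [cliqueS vS]] := cover v.
have /connectP[p res_p last_p] :=
  max_flow_target_reaches (proj1 maxf) maxf (hdeg_gt0 cliqueS vS).
by exists p.
Qed.
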